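(* Let $\mathcal X=\{1,\dots,J\}$, $\mathcal Y=\{1,\dots,K\}$, and let $\mathcal C_n\subset\mathcal X^n$ be a codebook of $M$ codewords, all of type $p_X$, used over a DMC $P_{\hat Y|X}$. Let $p_{\hat Y|X_1}$ be a conditional type such that $M\,|\mathcal T_{\mathbf x}(p_{\hat Y|X_1})|\ge 2|\mathcal T(p_{\hat Y})|$ for $\mathbf x$ of type $p_X$, where $p_{\hat Y}$ is the $\hat Y$-marginal of $p_X\times p_{\hat Y|X_1}$. Then there exist a codeword $\mathbf x_1\in\mathcal C_n$ and a joint type $p_{\hat YX_1X_2}$ on $\mathcal Y\times\mathcal X\times\mathcal X$ with $p_{\hat YX_1}=p_{\hat YX_2}$ such that $$\Pr\big[\exists\mathbf x_2\in\mathcal C_n\setminus\{\mathbf x_1\}:\ \hat p_{\hat{\mathbf y}\mathbf x_1\mathbf x_2}=p_{\hat YX_1X_2}\big]\ \ge\ \frac{1}{2(n+1)^{J^2K-1}}\Pr\big[\hat{\mathbf y}\in\mathcal T_{\mathbf x_1}(p_{\hat Y|X_1})\big],$$ where both probabilities are with respect to $\hat{\mathbf y}\sim P_{\hat Y|X}^n(\cdot|\mathbf x_1)$.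
   Context: The type of a sequence is its empirical distribution; $\hat p_{\hat{\mathbf y}\mathbf x_1\mathbf x_2}(k,j_1,j_2)=\frac1n|\{i:\hat y_i=k,x_{1,i}=j_1,x_{2,i}=j_2\}|$. The conditional type $\hat p_{\mathbf y|\mathbf x}(k|j)$ is $\hat p_{\mathbf x\mathbf y}(j,k)/\hat p_{\mathbf x}(j)$ if $\hat p_{\mathbf x}(j)>0$ and $1/K$ otherwise; $\mathcal T_{\mathbf x}(p_{\hat Y|X})=\{\hat{\mathbf y}:\hat p_{\hat{\mathbf y}|\mathbf x}=p_{\hat Y|X}\}$ and $\mathcal T(p_{\hat Y})$ is the set of sequences of type $p_{\hat Y}$. $P^n_{\hat Y|X}(\hat{\mathbf y}|\mathbf x)=\prod_i P_{\hat Y|X}(\hat y_i|x_i)$. *)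

From HB Require Import structures.
From mathcomp Require Import all_boot all_order all_algebra.
Set Implicit Arguments. Unset Strict Implicit. Unset Printing Implicit Defensive.
Import Order.TTheory GRing.Theory Num.Theory.
Local Open Scope ring_scope.

Section Types.
Variable R : realFieldType.

Definition ptype (n : nat) (A : finType) (x : {ffun 'I_n -> A}) : {ffun A -> R} :=
  [ffun a => #|[set i | x i == a]|%:R / n%:R].

Definition zip2 (n : nat) (A B : finType) (x : {ffun 'I_n -> A}) (y : {ffun 'I_n -> B})
  : {ffun 'I_n -> A * B} := [ffun i => (x i, y i)].
Definition zip3 (n : nat) (A B C : finType) (x : {ffun 'I_n -> A})
  (y : {ffun 'I_n -> B}) (z : {ffun 'I_n -> C}) : {ffun 'I_n -> A * B * C} :=
  [ffun i => (x i, y i, z i)].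

Definition condtype (n J K : nat) (x : {ffun 'I_n -> 'I_J}) (y : {ffun 'I_n -> 'I_K})
  : {ffun 'I_J * 'I_K -> R} :=
  [ffun jk => if 0 < ptype x jk.1 then ptype (zip2 x y) jk / ptype x jk.1
              else K%:R^-1].

Definition Tcond (n J K : nat) (x : {ffun 'I_n -> 'I_J}) (p : {ffun 'I_J * 'I_K -> R})
  : {set {ffun 'I_n -> 'I_K}} := [set y | condtype x y == p].

Definition Ttype (n : nat) (A : finType) (p : {ffun A -> R}) : {set {ffun 'I_n -> A}} :=
  [set y | ptype y == p].

Definition ymarg (J K : nat) (pX : {ffun 'I_J -> R}) (p : {ffun 'I_J * 'I_K -> R})
  : {ffun 'I_K -> R} := [ffun k => \sum_j pX j * p (j, k)].

Definition stochastic (J K : nat) (W : 'I_J -> 'I_K -> R) : Prop :=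
  (forall j k, 0 <= W j k) /\ (forall j, \sum_k W j k = 1).

Definition Pn (n J K : nat) (W : 'I_J -> 'I_K -> R) (x : {ffun 'I_n -> 'I_J})
  (y : {ffun 'I_n -> 'I_K}) : R := \prod_i W (x i) (y i).

Definition PrW (n J K : nat) (W : 'I_J -> 'I_K -> R) (x : {ffun 'I_n -> 'I_J})
  (E : pred {ffun 'I_n -> 'I_K}) : R := \sum_(y | E y) Pn W x y.

End Types.

From HB Require Import structures.
From mathcomp Require Import all_boot all_order all_algebra.
From mathcomp Require Import zify.
Set Implicit Arguments. Unset Strict Implicit. Unset Printing Implicit Defensive.
Import Order.TTheory GRing.Theory Num.Theory.
Local Open Scope ring_scope.

(* The conditional type classes T_x = T_x(p_{Y|X1}), x in C, all lie in
   T(p_Y), and the hypothesis gives sum_x |T_x| >= 2 |T(p_Y)|.  The parts of the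
   T_x covered by no other codeword are disjoint subsets of T(p_Y), so some
   codeword x1 has at least half of T_x1 covered by other codewords.  Choosing
   for each such y a covering codeword x2(y) and sorting these y by the joint
   type of (y, x1, x2(y)), one of the at most (n+1)^(J^2 K - 1) joint types
   collects a 1/(n+1)^(J^2 K - 1) fraction of them; as P^n(y|x1) is constant on
   T_x1, counting fractions are probability fractions.  That joint type has
   equal (Y,X1) and (Y,X2) marginals because x1 and x2 have the same type and y
   the same conditional type with respect to both. *)

Lemma sum_card_fibers (X A : finType) (z : X -> A) (P : pred X) :
  (\sum_(a : A) #|[set x | P x && (z x == a)]| = #|[set x | P x]|)%N.
Proof.
rewrite -sum1_card (partition_big z xpredT) //=.
by apply: eq_bigr => a _; rewrite -sum1_card; apply: eq_bigl => x; rewrite !inE.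
Qed.

Lemma pigeonhole_fiber (X Y : finType) (U : {set X}) (h : X -> Y) :
  (0 < #|U|)%N ->
  exists2 x, x \in U & (#|U| <= #|Y| * #|[set x' in U | h x' == h x]|)%N.
Proof.
move=> U_gt0; have [x0 Ux0] := card_gt0P U_gt0.
pose F q := [set x' in U | h x' == q].
have [qm _ qm_max] := @arg_maxnP _ (h x0) xpredT (fun q => #|F q|) isT.
have le_U : (#|U| <= #|Y| * #|F qm|)%N.
  have := sum_card_fibers h (fun x => x \in U); rewrite cardsE => <-.
  by rewrite -sum_nat_const; apply: leq_sum => q _; apply: qm_max.
have [x] : exists x, x \in F qm.
  by apply/card_gt0P; move: (leq_trans U_gt0 le_U); rewrite muln_gt0 => /andP[].
by rewrite inE => /andP[Ux /eqP hx]; exists x; rewrite ?hx.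
Qed.

Section Overlap.
Variables (X Y : finType) (C : {set X}) (T : X -> {set Y}) (S : {set Y}).
Hypothesis sub_TS : {in C, forall x, T x \subset S}.

Definition overlap x := T x :&: \bigcup_(x' in C :\ x) T x'.

Definition partner x y := odflt x [pick x' in C :\ x | y \in T x'].

Lemma partnerP x y :
  y \in overlap x -> partner x y \in C :\ x /\ y \in T (partner x y).
Proof.
rewrite inE => /andP[_ /bigcupP[x' Cx' Tx'y]].
by rewrite /partner; case: pickP => [x'' /andP[-> ->] | /(_ x')] //; rewrite Cx' Tx'y.
Qed.

Lemma leq_sum_card_unshared :
  (\sum_(x in C) #|T x :\: \bigcup_(x' in C :\ x) T x'| <= #|S|)%N.
Proof.
pose V x := if x \in C then T x :\: \bigcup_(x' in C :\ x) T x' else set0.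
have disjV x x' : x != x' -> [disjoint V x & V x'].
  move=> neq_xx'; rewrite -setI_eq0 /V.
  case: ifP => Cx; case: ifP => Cx'; rewrite ?set0I ?setI0 //.
  apply/eqP/setP => y; rewrite !inE; apply/negP => /andP[/andP[nVy _] /andP[_ Ty]].
  by case/negP: nVy; apply/bigcupP; exists x'; rewrite // !inE eq_sym neq_xx'.
rewrite big_mkcond /= (eq_bigr (fun x => #|V x|)) => [|x _]; last first.
  by rewrite /V; case: ifP; rewrite ?cards0.
under eq_bigr do rewrite -sum1_card.
rewrite -partition_disjoint_bigcup // sum1_card; apply: subset_leq_card.
apply/bigcupsP => x _; rewrite /V; case: ifP => Cx; last exact: sub0set.
exact: subset_trans (subsetDl _ _) (sub_TS Cx).
Qed.

Lemma exists_large_overlap :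
  (0 < #|C|)%N -> (0 < #|S|)%N -> {in C, forall x, (2 * #|S| <= #|C| * #|T x|)%N} ->
  exists2 x, x \in C & (0 < #|T x| <= 2 * #|overlap x|)%N.
Proof.
move=> C_gt0 S_gt0 large_T.
have [/exists_inP//|/exists_inPn small] :=
  boolP [exists x in C, 0 < #|T x| <= 2 * #|overlap x|]%N; exfalso.
have T_gt0 x : x \in C -> (0 < #|T x|)%N.
  move=> Cx; rewrite lt0n; apply: contraTneq (large_T x Cx) => ->.
  by rewrite muln0 -ltnNge muln_gt0.
have sumT_ge : (2 * #|S| <= \sum_(x in C) #|T x|)%N.
  rewrite -(leq_pmul2l C_gt0) big_distrr -sum_nat_const /=.
  exact: leq_sum large_T.
have sumT_split : (\sum_(x in C) #|T x| = \sum_(x in C) #|overlap x|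
    + \sum_(x in C) #|T x :\: \bigcup_(x' in C :\ x) T x'|)%N.
  by rewrite -big_split; apply: eq_bigr => x _; exact/esym/cardsID.
have : (\sum_(x in C) (2 * #|overlap x| + 1) <= \sum_(x in C) #|T x|)%N.
  by apply: leq_sum => x Cx; move: (small x Cx); rewrite T_gt0 // addn1 ltnNge.
rewrite big_split sum_nat_const -big_distrr /= muln1.
have := leq_sum_card_unshared; lia.
Qed.

End Overlap.

Definition occ (n : nat) (A : finType) (z : {ffun 'I_n -> A}) (a : A) : nat :=
  #|[set i | z i == a]|.

(* The count at [a0] is determined by the others, since all counts sum to [n];
   dropping it leaves only [n.+1 ^ #|A|.-1] codes. *)
Definition occ_code (n : nat) (A : finType) (a0 : A) (z : {ffun 'I_n -> A})
  : {ffun {a : A | a != a0} -> 'I_n.+1} := [ffun a => inord (occ z (val a))].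

Section Occurrences.
Variables (n : nat) (A : finType).
Implicit Types z : {ffun 'I_n -> A}.

Lemma sum_occ z : (\sum_a occ z a = n)%N.
Proof.
rewrite -[RHS]card_ord -cardsT -(sum_card_fibers z xpredT).
by apply: eq_bigr => a _; apply: eq_card => i; rewrite !inE.
Qed.

Lemma occ_le z a : (occ z a <= n)%N.
Proof. by rewrite -{2}(card_ord n) max_card. Qed.

Lemma occ_code_inj a0 z z' : occ_code a0 z = occ_code a0 z' -> occ z =1 occ z'.
Proof.
move=> eq_code.
have eq_occ_neq a : a != a0 -> occ z a = occ z' a.
  move=> neq_a; move/ffunP/(_ (exist _ a neq_a)): eq_code.
  by rewrite !ffunE => /(congr1 val); rewrite /= !inordK // ltnS occ_le.
move=> a; have [->|/eq_occ_neq//] := eqVneq a a0.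
have := sum_occ z; have := sum_occ z'.
rewrite (bigD1 a0) //= (bigD1 a0 (F := occ z)) //= (eq_bigr _ eq_occ_neq).
move=> sum_z' sum_z; apply/eqP.
by rewrite -(eqn_add2r (\sum_(i | i != a0) occ z' i)) sum_z sum_z'.
Qed.

Lemma card_occ_codes a0 :
  #|{ffun {a : A | a != a0} -> 'I_n.+1}| = (n.+1 ^ #|A|.-1)%N.
Proof. by rewrite card_ffun card_ord card_sig cardC1. Qed.

End Occurrences.

Section Types.
Variable R : realFieldType.

Section SameLength.
Variable n : nat.

Lemma ptypeE (A : finType) (z : {ffun 'I_n -> A}) a :
  ptype R z a = (occ z a)%:R / n%:R.
Proof. by rewrite ffunE. Qed.

Lemma eq_ptype (A : finType) (z z' : {ffun 'I_n -> A}) :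
  occ z =1 occ z' -> ptype R z = ptype R z'.
Proof. by move=> eq_occ; apply/ffunP => a; rewrite !ptypeE eq_occ. Qed.

Lemma ptype_occ_inj (A : finType) (z z' : {ffun 'I_n -> A}) :
  (0 < n)%N -> ptype R z = ptype R z' -> occ z =1 occ z'.
Proof.
move=> n_gt0 /ffunP eq_z a; have := congr1 ( *%R^~ n%:R) (eq_z a).
by rewrite /= !ptypeE !divfK ?pnatr_eq0 -?lt0n // => /eqP; rewrite eqr_nat => /eqP.
Qed.

Lemma sum_ptype_fibers (A B A' : finType) (z : {ffun 'I_n -> A})
    (w : {ffun 'I_n -> B}) (z' : {ffun 'I_n -> A'}) (phi : B -> A) a' :
  (forall i b, (z i == phi b) = (z' i == a') && (w i == b)) ->
  \sum_b ptype R z (phi b) = ptype R z' a'.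
Proof.
move=> fiberE; under eq_bigr do rewrite ptypeE.
rewrite -mulr_suml -natr_sum ptypeE; congr (_%:R / _).
apply: etrans (sum_card_fibers w (fun i => z' i == a')).
by apply: eq_bigr => b _; apply: eq_card => i; rewrite !inE fiberE.
Qed.

Lemma sum_ptype_zip3_last (A B : finType) (y : {ffun 'I_n -> B})
    (a b : {ffun 'I_n -> A}) k j :
  \sum_j2 ptype R (zip3 y a b) (k, j, j2) = ptype R (zip2 a y) (j, k).
Proof.
apply: (sum_ptype_fibers (w := b)) => i j2; rewrite !ffunE !xpair_eqE.
by case: (y i == k); case: (a i == j).
Qed.

Lemma sum_ptype_zip3_mid (A B : finType) (y : {ffun 'I_n -> B})
    (a b : {ffun 'I_n -> A}) k j :
  \sum_j1 ptype R (zip3 y a b) (k, j1, j) = ptype R (zip2 b y) (j, k).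
Proof.
apply: (sum_ptype_fibers (w := a)) => i j1; rewrite !ffunE !xpair_eqE.
by case: (y i == k); case: (a i == j1); case: (b i == j).
Qed.

Lemma pigeonhole_ptype (X A : finType) (a0 : A) (U : {set X})
    (f : X -> {ffun 'I_n -> A}) :
  (0 < #|U|)%N ->
  exists2 x, x \in U &
    (#|U| <= n.+1 ^ #|A|.-1 * #|[set x' in U | ptype R (f x') == ptype R (f x)]|)%N.
Proof.
move=> U_gt0; have [x Ux le_U] := pigeonhole_fiber (fun x => occ_code a0 (f x)) U_gt0.
exists x => //; rewrite -(card_occ_codes n a0) (leq_trans le_U) // leq_mul2l.
apply/orP; right; apply: subset_leq_card; apply/subsetP => x'; rewrite !inE.
by case/andP=> -> /eqP/occ_code_inj eq_occ; rewrite (eq_ptype eq_occ) eqxx.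
Qed.

End SameLength.

Section Conditional.
Variables (n J K : nat).
Implicit Types (x : {ffun 'I_n -> 'I_J}) (y : {ffun 'I_n -> 'I_K}).

Lemma ptype_zip2E x y j k :
  ptype R (zip2 x y) (j, k) = ptype R x j * condtype R x y (j, k).
Proof.
rewrite [condtype _ _ _ _]ffunE /=; case: ifP => [px_gt0|px_le0].
  by rewrite mulrC divfK // lt0r_neq0.
have occ_x0 : occ x j = 0%N.
  apply/eqP; apply: contraFT px_le0; rewrite -lt0n => occ_gt0.
  have n_gt0 : (0 < n)%N := leq_trans occ_gt0 (occ_le x j).
  by rewrite ptypeE divr_gt0 ?ltr0n.
have occ_xy0 : occ (zip2 x y) (j, k) = 0%N.
  apply/eqP; rewrite -leqn0 -occ_x0; apply: subset_leq_card; apply/subsetP => i.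
  by rewrite !inE ffunE xpair_eqE => /andP[].
by rewrite !ptypeE occ_x0 occ_xy0 !mul0r.
Qed.

Lemma eq_ptype_zip2 x x' y y' :
  ptype R x = ptype R x' -> condtype R x y = condtype R x' y' ->
  ptype R (zip2 x y) = ptype R (zip2 x' y').
Proof. by move=> eq_x eq_c; apply/ffunP => -[j k]; rewrite !ptype_zip2E eq_x eq_c. Qed.

Lemma ymarg_condtype x y : ymarg (ptype R x) (condtype R x y) = ptype R y.
Proof.
apply/ffunP => k; rewrite ffunE; under eq_bigr do rewrite -ptype_zip2E.
by apply: (sum_ptype_fibers (w := x)) => i j; rewrite ffunE xpair_eqE andbC.
Qed.

Lemma zip3_marginals_eq x1 x2 y :
  ptype R x1 = ptype R x2 -> condtype R x1 y = condtype R x2 y ->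
  forall k j, \sum_j2 ptype R (zip3 y x1 x2) (k, j, j2)
            = \sum_j1 ptype R (zip3 y x1 x2) (k, j1, j).
Proof.
move=> eq_x eq_c k j; rewrite sum_ptype_zip3_last sum_ptype_zip3_mid.
by rewrite (eq_ptype_zip2 eq_x eq_c).
Qed.

Lemma Tcond_sub_Ttype x (p : {ffun 'I_J * 'I_K -> R}) :
  Tcond x p \subset Ttype n (ymarg (ptype R x) p).
Proof. by apply/subsetP => y; rewrite !inE => /eqP <-; rewrite ymarg_condtype. Qed.

End Conditional.
End Types.

Section Channel.
Variables (R : realFieldType) (n J K : nat) (W : 'I_J -> 'I_K -> R).
Hypotheses (n_gt0 : (0 < n)%N) (W_ge0 : forall j k, 0 <= W j k).
Implicit Types (x : {ffun 'I_n -> 'I_J}) (y : {ffun 'I_n -> 'I_K}).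
Implicit Types (p : {ffun 'I_J * 'I_K -> R}) (E : pred {ffun 'I_n -> 'I_K}).

Lemma Pn_occ x y :
  Pn W x y = \prod_(jk : 'I_J * 'I_K) W jk.1 jk.2 ^+ occ (zip2 x y) jk.
Proof.
rewrite /Pn (partition_big (zip2 x y) xpredT) //; apply: eq_bigr => -[j k] _.
rewrite -prodr_const; apply: eq_big => i; first by rewrite !inE.
by rewrite ffunE => /eqP[-> ->].
Qed.

Lemma Pn_Tcond x p y y' :
  y \in Tcond x p -> y' \in Tcond x p -> Pn W x y = Pn W x y'.
Proof.
rewrite !inE => /eqP c_y /eqP c_y'; rewrite !Pn_occ; apply: eq_bigr => jk _.
have eq_c : condtype R x y = condtype R x y' by rewrite c_y c_y'.
by rewrite (ptype_occ_inj n_gt0 (eq_ptype_zip2 (erefl _) eq_c)).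
Qed.

Lemma Pn_ge0 x y : 0 <= Pn W x y.
Proof. by apply: prodr_ge0 => i _; apply: W_ge0. Qed.

Lemma PrW_ge0 x E : 0 <= PrW W x E.
Proof. by apply: sumr_ge0 => y _; apply: Pn_ge0. Qed.

Lemma PrW_Tcond x p y0 :
  y0 \in Tcond x p ->
  PrW W x (fun y => y \in Tcond x p) = #|Tcond x p|%:R * Pn W x y0.
Proof.
move=> T_y0; rewrite /PrW (eq_bigr (fun _ => Pn W x y0)) => [|y T_y].
  by rewrite sumr_const mulr_natl.
exact: Pn_Tcond T_y T_y0.
Qed.

Lemma PrW_ge_card x p y0 E (B : {set {ffun 'I_n -> 'I_K}}) :
  y0 \in Tcond x p -> B \subset Tcond x p -> {in B, forall y, E y} ->
  #|B|%:R * Pn W x y0 <= PrW W x E.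
Proof.
move=> T_y0 /subsetP sub_BT sub_BE; rewrite /PrW (bigID (mem B)) /=.
have -> : \sum_(y | E y && (y \in B)) Pn W x y = #|B|%:R * Pn W x y0.
  rewrite (eq_bigl (fun y => y \in B)) => [|y]; last first.
    by case By: (y \in B); rewrite ?andbF ?andbT ?sub_BE.
  rewrite (eq_bigr (fun _ => Pn W x y0)) => [|y By].
    by rewrite sumr_const mulr_natl.
  exact: Pn_Tcond (sub_BT _ By) T_y0.
by rewrite lerDl sumr_ge0 // => y _; apply: Pn_ge0.
Qed.

Lemma PrW_ge_Tcond_frac x p E (B : {set {ffun 'I_n -> 'I_K}}) (N : nat) :
  (0 < N)%N -> B \subset Tcond x p -> {in B, forall y, E y} ->
  (#|Tcond x p| <= N * #|B|)%N ->
  N%:R^-1 * PrW W x (fun y => y \in Tcond x p) <= PrW W x E.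
Proof.
move=> N_gt0 sub_BT sub_BE le_TB.
have [T0|[y0 T_y0]] := set_0Vmem (Tcond x p).
  by rewrite /PrW T0 big_set0 mulr0 PrW_ge0.
rewrite (PrW_Tcond T_y0); apply: le_trans (PrW_ge_card T_y0 sub_BT sub_BE).
rewrite mulrA ler_wpM2r ?Pn_ge0 // ler_pdivrMl ?ltr0n //.
by rewrite -natrM ler_nat.
Qed.

End Channel.

Theorem lemma2 (R : realFieldType) (J K n M : nat)
  (W : 'I_J -> 'I_K -> R)
  (C : {set {ffun 'I_n -> 'I_J}})
  (pX : {ffun 'I_J -> R})
  (pYX1 : {ffun 'I_J * 'I_K -> R}) :
  (0 < J)%N -> (0 < K)%N -> (0 < n)%N ->
  stochastic W ->
  #|C| = M ->
  (forall x, x \in C -> ptype R x = pX) ->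
  (* p_{Y|X1} is a conditional type for sequences of type p_X *)
  (exists (x : {ffun 'I_n -> 'I_J}) (y : {ffun 'I_n -> 'I_K}),
      ptype R x = pX /\ condtype R x y = pYX1) ->
  (forall x : {ffun 'I_n -> 'I_J}, ptype R x = pX ->
      (M * #|Tcond x pYX1| >= 2 * #|Ttype n (ymarg pX pYX1)|)%N) ->
  exists x1, x1 \in C /\
  exists p : {ffun 'I_K * 'I_J * 'I_J -> R},
    (* p is a joint type (of length-n sequences) on Y x X x X *)
    (exists (y : {ffun 'I_n -> 'I_K}) (a b : {ffun 'I_n -> 'I_J}),
        ptype R (zip3 y a b) = p) /\
    (* p_{Y X1} = p_{Y X2} *)
    (forall k j, \sum_(j2 : 'I_J) p (k, j, j2) = \sum_(j1 : 'I_J) p (k, j1, j)) /\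
    PrW W x1 (fun y => [exists x2 in C :\ x1, ptype R (zip3 y x1 x2) == p])
      >= ((2 * (n + 1) ^ (J ^ 2 * K - 1))%N%:R)^-1
         * PrW W x1 (fun y => y \in Tcond x1 pYX1).
Proof.
move=> J_gt0 K_gt0 n_gt0 [W_ge0 _] <- type_C [x0 [y0 [type_x0 c_x0]]] large_T.
pose T (x : {ffun 'I_n -> 'I_J}) := Tcond x pYX1; pose S := Ttype n (ymarg pX pYX1).
have sub_TS : {in C, forall x, T x \subset S}.
  by move=> x /type_C type_x; rewrite /S -type_x; apply: Tcond_sub_Ttype.
have S_gt0 : (0 < #|S|)%N.
  apply/card_gt0P; exists y0; rewrite /S -type_x0.
  by apply: (subsetP (Tcond_sub_Ttype x0 pYX1)); rewrite inE c_x0.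
have C_gt0 : (0 < #|C|)%N.
  rewrite lt0n; apply: contraTneq (large_T x0 type_x0) => ->.
  by rewrite mul0n -ltnNge muln_gt0.
have [x1 C_x1 /andP[T_gt0 large_ov]] :=
  exists_large_overlap sub_TS C_gt0 S_gt0 (fun x Cx => large_T x (type_C x Cx)).
have ov_gt0 : (0 < #|overlap C T x1|)%N by lia.
pose g := partner C T x1; pose a0 := (Ordinal K_gt0, Ordinal J_gt0, Ordinal J_gt0).
have [ym ov_ym large_F] := pigeonhole_ptype R a0 (fun y => zip3 y x1 (g y)) ov_gt0.
have [/setD1P[_ C_x2] T_x2_ym] := partnerP ov_ym.
have /setIP[T_ym _] := ov_ym.
exists x1; split=> //; exists (ptype R (zip3 ym x1 (g ym))).
split; first by exists ym, x1, (g ym).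
split.
  apply: zip3_marginals_eq; first by rewrite !type_C.
  by move: T_ym T_x2_ym; rewrite !inE => /eqP -> /eqP ->.
apply: (PrW_ge_Tcond_frac n_gt0 W_ge0 (B := [set y in overlap C T x1 |
  ptype R (zip3 y x1 (g y)) == ptype R (zip3 ym x1 (g ym))])).
- by rewrite muln_gt0 expn_gt0 addn1.
- by apply/subsetP => y; rewrite !inE => /andP[/andP[]].
- move=> y; rewrite inE => /andP[ov_y eq_p]; apply/exists_inP.
  by exists (g y); first by case: (partnerP ov_y).
rewrite -mulnA (leq_trans large_ov) // leq_mul2l; apply/orP; right.
apply: leq_trans large_F _; rewrite !card_prod !card_ord addn1.
have -> : ((K * J * J).-1 = J ^ 2 * K - 1)%N by rewrite -mulnn; lia.
exact: leqnn.
Qed.
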